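(* Let $n\ge p\ge1$, $0<\varepsilon<1$, $\lambda>0$, $\tilde a>0$. Define $$K(\lambda,\varepsilon,a,d)=\frac{\lambda(1-\varepsilon)d+a\sqrt{(\varepsilon-d)/2}}{a^2+\lambda^2(1+\varepsilon)d^2},\qquad Q(\lambda,\varepsilon,\tilde a)=\inf_{a\in(0,\tilde a],\,d\in(0,\varepsilon]}K(\lambda,\varepsilon,a,d),$$ and $\eta^*(\tilde a,\varepsilon,\lambda)=\min\{Q(\lambda,\varepsilon,\tilde a),\frac1{2\lambda}\}$. Then $\eta^*(\tilde a,\varepsilon,\lambda)>0$, and for every $X\in\mathbb{R}^{n\times p}$ with $\|X^\top X-I_p\|\le\varepsilon$ and every skew-symmetric $A\in\mathbb{R}^{n\times n}$ with $\|AX\|\le\tilde a$, the quantity $$\eta(X)=\min\left\{\frac{\lambda d(1-d)+\sqrt{\lambda^2d^2(1-d)^2+g^2(\varepsilon-d)}}{g^2},\ \frac{1}{2\lambda}\right\},$$ where $g=\|AX+\lambda X(X^\top X-I_p)\|$ and $d=\|X^\top X-I_p\|$ (first term interpreted as $+\infty$ when $g=0$), satisfies $\eta(X)\ge\eta^*(\tilde a,\varepsilon,\lambda)$.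
   Context: $\|\cdot\|$ denotes the Frobenius norm. $\eta(X)$ is the safeguard step size guaranteeing that $X-\eta(AX+\lambda X(X^\top X-I_p))$ stays in $\{\|Y^\top Y-I_p\|\le\varepsilon\}$ for all $\eta\le\eta(X)$. *)

From HB Require Import structures.
From mathcomp Require Import all_boot all_order all_algebra.
From mathcomp Require Import classical_sets reals.
Set Implicit Arguments. Unset Strict Implicit. Unset Printing Implicit Defensive.
Import Order.TTheory GRing.Theory Num.Theory.
Local Open Scope ring_scope.
Local Open Scope classical_set_scope.

Definition frob {R : realType} {m n : nat} (M : 'M[R]_(m, n)) : R :=
  Num.sqrt (\sum_(i < m) \sum_(j < n) M i j ^+ 2).

Definition Kfun {R : realType} (lam eps a d : R) : R :=
  (lam * (1 - eps) * d + a * Num.sqrt ((eps - d) / 2)) /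
  (a ^+ 2 + lam ^+ 2 * (1 + eps) * d ^+ 2).

Definition Qfun {R : realType} (lam eps at_ : R) : R :=
  inf [set k | exists a d : R,
         [/\ 0 < a, a <= at_, 0 < d, d <= eps & k = Kfun lam eps a d]].

Definition eta_star {R : realType} (at_ eps lam : R) : R :=
  Num.min (Qfun lam eps at_) (1 / (2 * lam)).

(* safeguard step size eta(X); first term is +oo when g = 0 *)
Definition eta_X {R : realType} {n p : nat} (A : 'M[R]_n) (X : 'M[R]_(n, p))
    (lam eps : R) : R :=
  let D := X^T *m X - 1%:M in
  let g := frob (A *m X + lam *: (X *m D)) in
  let d := frob D in
  if g == 0 then 1 / (2 * lam)
  else Num.min ((lam * d * (1 - d)
                 + Num.sqrt (lam ^+ 2 * d ^+ 2 * (1 - d) ^+ 2 + g ^+ 2 * (eps - d)))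
                / g ^+ 2)
               (1 / (2 * lam)).

From HB Require Import structures.
From mathcomp Require Import all_boot all_order all_algebra.
From mathcomp Require Import classical_sets reals.
From mathcomp Require Import ring lra.
Set Implicit Arguments. Unset Strict Implicit. Unset Printing Implicit Defensive.
Import Order.TTheory GRing.Theory Num.Theory.
Local Open Scope ring_scope.

(* Write [D = X^T X - 1], [a = |AX|], [d = |D|] and [g = |AX + lam X D|].  As [A] is skew
   and [D] symmetric, [AX] and [XD] are orthogonal for the Frobenius inner product, so
   [g^2 = a^2 + lam^2 |XD|^2]; moreover [|XD|^2 = |D|^2 + <D, D^2> <= (1 + d) d^2].  Hence
   [a <= g] and [g^2 <= a^2 + lam^2 (1 + eps) d^2], and under these two constraints the
   first term of [eta(X)] dominates [K] at the point [(min at_ g, d)] of the domain of [Q]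
   (at a small positive [d'] instead of [d] when [d = 0]).  Finally [Q > 0] because [K] is
   bounded below on that domain by an explicit positive constant. *)

Section MatrixDot.
Variable R : realFieldType.

Lemma sum_mul_sqr_le (I : finType) (x y : I -> R) :
  (\sum_i x i * y i) ^+ 2 <= (\sum_i x i * x i) * (\sum_i y i * y i).
Proof.
set A := \sum_i x i * x i; set B := \sum_i y i * y i; set C := \sum_i x i * y i.
have A0 : 0 <= A by apply: sumr_ge0 => i _; rewrite -expr2 sqr_ge0.
have [B0|Bneq0] := eqVneq B 0.
  have y0 i : y i = 0.
    apply/eqP; rewrite -[y i == 0]orbb -mulf_eq0; apply/eqP.
    move/eqP: B0; rewrite psumr_eq0 => [/allP/(_ i (mem_index_enum i))/eqP //|j _].
    by rewrite -expr2 sqr_ge0.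
  by rewrite /C big1 => [|i _]; rewrite ?y0 ?mulr0 // expr0n mulr_ge0 // B0.
have B0 : 0 < B by rewrite lt_def Bneq0 sumr_ge0 // => i _; rewrite -expr2 sqr_ge0.
have : 0 <= \sum_i (B * x i - C * y i) ^+ 2 by apply: sumr_ge0 => i _; rewrite sqr_ge0.
have -> : \sum_i (B * x i - C * y i) ^+ 2 = B * (A * B - C ^+ 2).
  rewrite (eq_bigr (fun i => B ^+ 2 * (x i * x i) - 2 * B * C * (x i * y i) + C ^+ 2 * (y i * y i)));
    last by move=> i _; ring.
  by rewrite !big_split /= sumrN -!mulr_sumr -/A -/B -/C; ring.
by rewrite pmulr_rge0 // subr_ge0 mulrC.
Qed.

Definition mxdot m n (M N : 'M[R]_(m, n)) : R := \sum_i \sum_j M i j * N i j.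

Lemma mxdot_tr m n (M N : 'M[R]_(m, n)) : mxdot M N = \tr (M^T *m N).
Proof.
rewrite /mxtrace /mxdot exchange_big; apply: eq_bigr => j _.
by rewrite mxE; apply: eq_bigr => i _; rewrite mxE.
Qed.

Lemma mxdot_ge0 m n (M : 'M[R]_(m, n)) : 0 <= mxdot M M.
Proof. by do 2!(apply: sumr_ge0 => ? _); rewrite -expr2 sqr_ge0. Qed.

Lemma mxdot_sqr_le m n (M N : 'M[R]_(m, n)) :
  mxdot M N ^+ 2 <= mxdot M M * mxdot N N.
Proof. by rewrite /mxdot !pair_big; apply: sum_mul_sqr_le. Qed.

Lemma mxdot_mulmx_le m n k (M : 'M[R]_(m, n)) (N : 'M[R]_(n, k)) :
  mxdot (M *m N) (M *m N) <= mxdot M M * mxdot N N.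
Proof.
rewrite /mxdot mulr_suml; apply: ler_sum => i _.
rewrite (exchange_big _ _ _ _ _ (fun j l => N j l * N j l)) mulr_sumr.
apply: ler_sum => j _; rewrite mxE -expr2.
exact: (sum_mul_sqr_le (fun l => M i l) (fun l => N l j)).
Qed.

Lemma mxdotDZ m n (M N : 'M[R]_(m, n)) c :
  mxdot (M + c *: N) (M + c *: N) = mxdot M M + 2 * c * mxdot M N + c ^+ 2 * mxdot N N.
Proof.
rewrite /mxdot !mulr_sumr -!big_split /=; apply: eq_bigr => i _.
rewrite !mulr_sumr -!big_split /=; apply: eq_bigr => j _.
by rewrite !mxE; ring.
Qed.

Lemma mxdot_skew_sym n p (A : 'M[R]_n) (X : 'M[R]_(n, p)) (D : 'M[R]_p) :
  A^T = - A -> D^T = D -> mxdot (A *m X) (X *m D) = 0.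
Proof.
move=> skewA symD; set M := X^T *m A *m X.
have skewM : M^T = - M by rewrite /M !trmx_mul trmxK skewA mulNmx mulmxN mulmxA.
have -> : mxdot (A *m X) (X *m D) = - \tr (M *m D).
  by rewrite mxdot_tr trmx_mul skewA mulmxN mulNmx -!mulmxA raddfN /M !mulmxA.
have : \tr (M *m D) = - \tr (M *m D).
  by rewrite -{1}mxtrace_tr trmx_mul symD skewM mulmxN raddfN mxtrace_mulC.
lra.
Qed.

Lemma trmx_gram_dev n p (X : 'M[R]_(n, p)) :
  (X^T *m X - 1%:M)^T = X^T *m X - 1%:M.
Proof. by rewrite linearB /= trmx_mul trmxK tr_scalar_mx. Qed.

Lemma mxdot_mul_gram_dev n p (X : 'M[R]_(n, p)) (D := X^T *m X - 1%:M) :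
  mxdot (X *m D) (X *m D) = mxdot D D + mxdot D (D *m D).
Proof.
have gramX : X^T *m X = D + 1%:M by rewrite /D subrK.
rewrite !mxdot_tr trmx_mul mulmxA -(mulmxA D^T) gramX trmx_gram_dev.
by rewrite mulmxDr mulmx1 mulmxDl mxtraceD -mulmxA addrC.
Qed.

End MatrixDot.

Section Frobenius.
Variable R : realType.

Lemma frobE m n (M : 'M[R]_(m, n)) : frob M = Num.sqrt (mxdot M M).
Proof. by []. Qed.

Lemma frob_ge0 m n (M : 'M[R]_(m, n)) : 0 <= frob M.
Proof. exact: sqrtr_ge0. Qed.

Lemma frob_sqr m n (M : 'M[R]_(m, n)) : frob M ^+ 2 = mxdot M M.
Proof. by rewrite frobE sqr_sqrtr ?mxdot_ge0. Qed.

Lemma mxdot_le_frob m n (M N : 'M[R]_(m, n)) : mxdot M N <= frob M * frob N.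
Proof.
apply: le_trans (ler_norm _) _.
by rewrite -sqrtr_sqr !frobE -sqrtrM ?mxdot_ge0 // ler_wsqrtr // mxdot_sqr_le.
Qed.

Lemma frob_mulmx_le m n k (M : 'M[R]_(m, n)) (N : 'M[R]_(n, k)) :
  frob (M *m N) <= frob M * frob N.
Proof. by rewrite !frobE -sqrtrM ?mxdot_ge0 // ler_wsqrtr // mxdot_mulmx_le. Qed.

Lemma frob_mul_gram_dev_le n p (X : 'M[R]_(n, p)) (D := X^T *m X - 1%:M) :
  frob (X *m D) ^+ 2 <= (1 + frob D) * frob D ^+ 2.
Proof.
rewrite frob_sqr mxdot_mul_gram_dev -frob_sqr mulrDl mul1r lerD2l.
apply: le_trans (mxdot_le_frob _ _) _.
by rewrite expr2 ler_wpM2l ?frob_ge0 ?frob_mulmx_le.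
Qed.

Lemma frob_skew_gradient_sqr n p (A : 'M[R]_n) (X : 'M[R]_(n, p)) (lam : R)
    (D := X^T *m X - 1%:M) :
  A^T = - A ->
  frob (A *m X + lam *: (X *m D)) ^+ 2 = frob (A *m X) ^+ 2 + lam ^+ 2 * frob (X *m D) ^+ 2.
Proof.
by move=> skewA; rewrite !frob_sqr mxdotDZ mxdot_skew_sym ?trmx_gram_dev // mulr0 addr0.
Qed.

End Frobenius.

Section StepBound.
Variable R : realType.

Lemma mul_sqrtr (b x : R) : 0 <= b -> b * Num.sqrt x = Num.sqrt (b ^+ 2 * x).
Proof. by move=> b0; rewrite sqrtrM ?sqr_ge0 // sqrtr_sqr ger0_norm. Qed.

Lemma ler_frac (x y u v : R) : 0 <= x -> x <= y -> 0 < v -> v <= u -> x / u <= y / v.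
Proof.
move=> x0 xy v0 vu; have u0 : 0 < u := lt_le_trans v0 vu.
apply: ler_pM => //; first by rewrite invr_ge0 ltW.
by rewrite lef_pV2 ?posrE.
Qed.

Definition eta_root (lam eps d g : R) : R :=
  (lam * d * (1 - d) + Num.sqrt (lam ^+ 2 * d ^+ 2 * (1 - d) ^+ 2 + g ^+ 2 * (eps - d)))
  / g ^+ 2.

Lemma Kfun_le_eta_root (lam eps a d g : R) :
  0 <= lam -> eps <= 1 -> 0 <= a -> a <= g -> 0 < g -> 0 <= d -> d <= eps ->
  g ^+ 2 <= a ^+ 2 + lam ^+ 2 * (1 + eps) * d ^+ 2 ->
  Kfun lam eps a d <= eta_root lam eps d g.
Proof.
move=> lam0 eps1 a0 ag g0 d0 deps gup.
have epsd : 0 <= eps - d by rewrite subr_ge0.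
apply: ler_frac => //; last exact: exprn_gt0.
  by rewrite addr_ge0 ?mulr_ge0 ?sqrtr_ge0 ?subr_ge0.
apply: lerD.
  by have := mulr_ge0 (mulr_ge0 lam0 d0) epsd; nra.
rewrite mul_sqrtr // ler_wsqrtr //.
have := ler_pM a0 a0 ag ag; have := sqr_ge0 (lam * d * (1 - d)); nra.
Qed.

Lemma exists_Kfun_le_eta_root0 (lam eps g : R) :
  0 < lam -> 0 < eps -> eps <= 1 -> 0 < g ->
  exists2 d, 0 < d <= eps & Kfun lam eps g d <= eta_root lam eps 0 g.
Proof.
move=> lam0 eps0 eps1 g0.
set r := Num.sqrt (g ^+ 2 * eps).
have r0 : 0 < r by rewrite sqrtr_gt0 mulr_gt0 ?exprn_gt0.
pose d := Num.min eps (r / (4 * lam)).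
have d0 : 0 < d by rewrite lt_min eps0 divr_gt0 ?mulr_gt0.
have deps : d <= eps by rewrite ge_min lexx.
have lamd : lam * d <= r / 4.
  have : d <= r / (4 * lam) by rewrite ge_min lexx orbT.
  by rewrite ler_pdivlMr ?mulr_gt0 // ler_pdivlMr // => h; lra.
exists d; first by rewrite d0.
have -> : eta_root lam eps 0 g = r / g ^+ 2.
  by rewrite /eta_root !(mulr0, mul0r, add0r, subr0) expr0n /= mulr0 mul0r add0r.
have lam_ge0 : 0 <= lam := ltW lam0; have g_ge0 : 0 <= g := ltW g0.
have d_ge0 : 0 <= d := ltW d0.
apply: ler_frac.
- by rewrite addr_ge0 ?mulr_ge0 ?sqrtr_ge0 ?subr_ge0.
- have : g * Num.sqrt ((eps - d) / 2) <= 3 / 4 * r.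
    rewrite /r !mul_sqrtr //; last by lra.
    by apply: ler_wsqrtr; have := sqr_ge0 g; nra.
  have := mulr_ge0 lam_ge0 d_ge0; nra.
- exact: exprn_gt0.
- by rewrite lerDl !mulr_ge0 ?sqr_ge0 //; lra.
Qed.

Lemma ler_min_ratio_mul (a1 a2 b1 b2 x y : R) : 0 < b1 -> 0 < b2 -> 0 <= x -> 0 <= y ->
  Num.min (a1 / b1) (a2 / b2) * (b1 * x + b2 * y) <= a1 * x + a2 * y.
Proof.
move=> b10 b20 x0 y0; rewrite mulrDr !mulrA.
by apply: lerD; apply: ler_wpM2r => //; rewrite -ler_pdivlMr // ge_min lexx ?orbT.
Qed.

(* For [d <= eps/2] the numerator of [Kfun] is at least [lam (1 - eps) d + sqrt(eps/4) a]
   and its denominator at most [lam^2 (1 + eps) eps d + at_ a]; for [d >= eps/2] they are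
   at least [lam (1 - eps) eps / 2] and at most [at_^2 + lam^2 (1 + eps) eps^2]. *)
Definition Kfun_lbound (lam eps at_ : R) : R :=
  Num.min
    (Num.min (lam * (1 - eps) / (lam ^+ 2 * (1 + eps) * eps)) (Num.sqrt (eps / 4) / at_))
    (lam * (1 - eps) * eps / 2 / (at_ ^+ 2 + lam ^+ 2 * (1 + eps) * eps ^+ 2)).

Lemma Kfun_lbound_gt0 (lam eps at_ : R) :
  0 < lam -> 0 < eps -> eps < 1 -> 0 < at_ -> 0 < Kfun_lbound lam eps at_.
Proof.
move=> lam0 eps0 eps1 at0.
have al0 : 0 < lam * (1 - eps) by rewrite mulr_gt0 // subr_gt0.
have c0 : 0 < lam ^+ 2 * (1 + eps) by rewrite mulr_gt0 ?exprn_gt0 //; lra.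
have ceps0 : 0 < lam ^+ 2 * (1 + eps) * eps by rewrite mulr_gt0.
have s0 : 0 < Num.sqrt (eps / 4) by rewrite sqrtr_gt0 divr_gt0.
have num0 : 0 < lam * (1 - eps) * eps / 2 by rewrite divr_gt0 // mulr_gt0.
have den0 : 0 < at_ ^+ 2 + lam ^+ 2 * (1 + eps) * eps ^+ 2.
  by rewrite addr_gt0 ?exprn_gt0 // mulr_gt0 ?exprn_gt0.
rewrite !lt_min -!andbA; apply/and3P; split; apply: divr_gt0;
  [exact: al0 | exact: ceps0 | exact: s0 | exact: at0 | exact: num0 | exact: den0].
Qed.

Lemma Kfun_ge_lbound (lam eps at_ a d : R) :
  0 < lam -> 0 < eps -> eps < 1 -> 0 < at_ ->
  0 < a -> a <= at_ -> 0 < d -> d <= eps -> Kfun_lbound lam eps at_ <= Kfun lam eps a d.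
Proof.
move=> lam0 eps0 eps1 at0 a0 a_le d0 d_le.
set al := lam * (1 - eps); set c := lam ^+ 2 * (1 + eps).
have al0 : 0 < al by rewrite mulr_gt0 // subr_gt0.
have c0 : 0 < c by rewrite mulr_gt0 ?exprn_gt0 //; lra.
have den0 : 0 < a ^+ 2 + c * d ^+ 2 by rewrite addr_gt0 ?exprn_gt0 // mulr_gt0 ?exprn_gt0.
have lb0 := Kfun_lbound_gt0 lam0 eps0 eps1 at0.
rewrite /Kfun -/al -/c ler_pdivlMr //.
have [d_small|d_large] := lerP d (eps / 2).
  set m := Num.min (al / (c * eps)) (Num.sqrt (eps / 4) / at_).
  have lb_le : Kfun_lbound lam eps at_ <= m by rewrite ge_min lexx.
  have den_le : a ^+ 2 + c * d ^+ 2 <= c * eps * d + at_ * a.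
    rewrite addrC; apply: lerD; rewrite expr2 ?mulrA ?ler_pM2r //.
    by rewrite ler_pM2l.
  apply: le_trans (ler_pM (ltW lb0) (ltW den0) lb_le den_le) _.
  apply: le_trans (ler_min_ratio_mul _ _ (mulr_gt0 c0 eps0) at0 (ltW d0) (ltW a0)) _.
  by rewrite lerD2l mulrC ler_pM2l // ler_wsqrtr //; lra.
set den := at_ ^+ 2 + c * eps ^+ 2.
have den_le : a ^+ 2 + c * d ^+ 2 <= den.
  apply: lerD; last rewrite ler_pM2l //.
    by rewrite !expr2 ler_pM ?(ltW a0).
  by rewrite !expr2 ler_pM ?(ltW d0).
have lb_le : Kfun_lbound lam eps at_ <= al * eps / 2 / den by rewrite ge_min lexx orbT.
apply: le_trans (ler_pM (ltW lb0) (ltW den0) lb_le den_le) _.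
have den_gt0 : 0 < den by rewrite addr_gt0 ?exprn_gt0 // mulr_gt0 ?exprn_gt0.
have : 0 <= a * Num.sqrt ((eps - d) / 2) by rewrite mulr_ge0 ?sqrtr_ge0 ?ltW.
rewrite divfK ?gt_eqF //; have := ltW al0; nra.
Qed.

Lemma Qfun_ge_lbound (lam eps at_ : R) :
  0 < lam -> 0 < eps -> eps < 1 -> 0 < at_ ->
  Kfun_lbound lam eps at_ <= Qfun lam eps at_.
Proof.
move=> lam0 eps0 eps1 at0; apply: lb_le_inf.
  by exists (Kfun lam eps at_ eps), at_, eps.
by move=> _ [a [d [a0 a_le d0 d_le ->]]]; exact: Kfun_ge_lbound.
Qed.

Lemma Qfun_le_Kfun (lam eps at_ a d : R) :
  0 < lam -> 0 < eps -> eps < 1 -> 0 < at_ ->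
  0 < a -> a <= at_ -> 0 < d -> d <= eps -> Qfun lam eps at_ <= Kfun lam eps a d.
Proof.
move=> lam0 eps0 eps1 at0 a0 a_le d0 d_le; apply: ge_inf; last by exists a, d.
exists (Kfun_lbound lam eps at_) => _ [a' [d' [a'0 a'_le d'0 d'_le ->]]].
exact: Kfun_ge_lbound.
Qed.

Lemma Qfun_le_eta_root (lam eps at_ a d g : R) :
  0 < lam -> 0 < eps -> eps < 1 -> 0 < at_ ->
  0 <= a -> a <= at_ -> a <= g -> 0 < g -> 0 <= d -> d <= eps ->
  g ^+ 2 <= a ^+ 2 + lam ^+ 2 * (1 + eps) * d ^+ 2 ->
  Qfun lam eps at_ <= eta_root lam eps d g.
Proof.
move=> lam0 eps0 eps1 at0 a0 a_le a_le_g g0 d0 d_le g_le.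
have [d_eq0 | d_neq0] := eqVneq d 0.
  (* then [g = a]; [Kfun g] is evaluated at a small positive [d'] instead of [0] *)
  have g_le_a : g <= a.
    move: g_le; rewrite d_eq0 expr0n mulr0 addr0.
    by rewrite ler_pXn2r ?nnegrE // ltW.
  have [d' /andP[d'0 d'_le] Kd'] := exists_Kfun_le_eta_root0 lam0 eps0 (ltW eps1) g0.
  rewrite d_eq0; apply: le_trans Kd'.
  exact: Qfun_le_Kfun lam0 eps0 eps1 at0 g0 (le_trans g_le_a a_le) d'0 d'_le.
(* [a] may be [0], outside the domain of [Qfun]; [min at_ g] is inside and larger. *)
set a' := Num.min at_ g.
have a'0 : 0 < a' by rewrite lt_min at0 g0.
have a'_le : a' <= at_ by rewrite ge_min lexx.
have a'_le_g : a' <= g by rewrite ge_min lexx orbT.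
have a_le_a' : a <= a' by rewrite le_min a_le a_le_g.
have d_gt0 : 0 < d by rewrite lt_def d_neq0 d0.
apply: le_trans (Qfun_le_Kfun lam0 eps0 eps1 at0 a'0 a'_le d_gt0 d_le) _.
apply: Kfun_le_eta_root (ltW lam0) (ltW eps1) (ltW a'0) a'_le_g g0 d0 d_le _.
by apply: le_trans g_le _; rewrite lerD2r !expr2 ler_pM.
Qed.

End StepBound.

Theorem lemma4 (R : realType) (n p : nat) (eps lam at_ : R) :
  (1 <= p)%N -> (p <= n)%N ->
  0 < eps -> eps < 1 -> 0 < lam -> 0 < at_ ->
  0 < eta_star at_ eps lam /\
  forall (X : 'M[R]_(n, p)) (A : 'M[R]_n),
    frob (X^T *m X - 1%:M) <= eps ->
    A^T = - A ->
    frob (A *m X) <= at_ ->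
    eta_star at_ eps lam <= eta_X A X lam eps.
Proof.
move=> _ _ eps0 eps1 lam0 at0.
have Q0 : 0 < Qfun lam eps at_.
  exact: lt_le_trans (Kfun_lbound_gt0 lam0 eps0 eps1 at0) (Qfun_ge_lbound lam0 eps0 eps1 at0).
have half0 : 0 < 1 / (2 * lam) by rewrite divr_gt0 // mulr_gt0.
have eta_le_half : eta_star at_ eps lam <= 1 / (2 * lam) by rewrite ge_min lexx orbT.
split => [|X A d_le skewA a_le]; first by rewrite lt_min Q0 half0.
rewrite /eta_X /=; set D := X^T *m X - 1%:M; set g := frob _.
case: eqP => [// | /eqP g_neq0].
rewrite le_min eta_le_half andbT ge_min -/(eta_root lam eps (frob D) g); apply/orP; left.
have g0 : 0 < g by rewrite lt_def g_neq0 frob_ge0.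
have g_sqr : g ^+ 2 = frob (A *m X) ^+ 2 + lam ^+ 2 * frob (X *m D) ^+ 2.
  exact: frob_skew_gradient_sqr.
have XD_le : frob (X *m D) ^+ 2 <= (1 + frob D) * frob D ^+ 2 := frob_mul_gram_dev_le X.
apply: (Qfun_le_eta_root (a := frob (A *m X))) => //; rewrite ?frob_ge0 //.
  have : frob (A *m X) ^+ 2 <= g ^+ 2 by rewrite g_sqr lerDl mulr_ge0 ?sqr_ge0.
  by rewrite ler_pXn2r ?nnegrE ?frob_ge0.
rewrite g_sqr lerD2l -mulrA ler_wpM2l ?sqr_ge0 //.
by apply: le_trans XD_le _; rewrite ler_wpM2r ?sqr_ge0 ?lerD2l.
Qed.
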